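(* Let $\sigma_0,\sigma_\epsilon>0$, $\theta_0\in\mathbb{R}$. Let the prior be $\Theta\sim N(\theta_0,\sigma_0^2)$ and the signal $X=\Theta+\epsilon$ with $\epsilon\sim\mathrm{Cauchy}(0,\sigma_\epsilon)$ independent of $\Theta$. For $x\in\mathbb{R}$ put $x_0=(x-\theta_0)/\sigma_0$, $a=\sigma_\epsilon/\sigma_0$ and $z=(a+ix_0)/\sqrt2$. Then the posterior mean $\theta_1=\mathbb{E}[\Theta\mid X=x]$ equals $$\theta_1=x+\sigma_\epsilon\,\frac{\operatorname{Im}\{\operatorname{erfcx}(z)\}}{\operatorname{Re}\{\operatorname{erfcx}(z)\}},$$ where $\operatorname{erfcx}(z)=e^{z^2}\bigl(1-\frac{2}{\sqrt\pi}\int_0^z e^{-t^2}\,dt\bigr)$.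
   Context: $\mathrm{Cauchy}(\mu,s)$ has density $t\mapsto\frac{1}{\pi s[1+((t-\mu)/s)^2]}$. The posterior mean is $\theta_1=\frac{\int\theta f_\Theta(\theta)l_\epsilon(x-\theta)d\theta}{\int f_\Theta(\theta)l_\epsilon(x-\theta)d\theta}$ with $f_\Theta$ the prior density and $l_\epsilon$ the noise density; the integral in erfcx is along any path (the integrand is entire). *)

From Stdlib Require Import Reals.
From Coquelicot Require Import Coquelicot.
Open Scope R_scope.

Definition normal_pdf (mu s t : R) : R :=
  / (s * sqrt (2 * PI)) * exp (- (t - mu) ^ 2 / (2 * s ^ 2)).

Definition cauchy_pdf (mu s t : R) : R :=
  / (PI * s * (1 + ((t - mu) / s) ^ 2)).

Definition posterior_mean (fTheta leps : R -> R) (x : R) : R :=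
  RInt_gen (fun th => th * fTheta th * leps (x - th))
           (Rbar_locally m_infty) (Rbar_locally p_infty)
  / RInt_gen (fun th => fTheta th * leps (x - th))
           (Rbar_locally m_infty) (Rbar_locally p_infty).

Definition cexp (z : C) : C := (exp (Re z) * cos (Im z), exp (Re z) * sin (Im z)).

(* Complex integral int_0^z e^{-t^2} dt along the straight segment t = s z, s in [0,1]
   (the integrand is entire, so any path gives the same value). *)
Definition int0_exp_msq (z : C) : C :=
  Cmult z (RInt (V := C_R_CompleteNormedModule)
                (fun s : R => cexp (Copp (Cmult (RtoC s * z) (RtoC s * z)))) 0 1).

Definition erfcx (z : C) : C :=
  Cmult (cexp (Cmult z z)) (Cminus 1 (Cmult (RtoC (2 / sqrt PI)) (int0_exp_msq z))).

(* Write z = p + i q, p = sigmaeps / (sqrt 2 sigma0) > 0, q = (x - theta0) / (sqrt 2 sigma0).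
   The substitution theta = theta0 + sqrt 2 sigma0 u turns the two integrals of the posterior
   mean into the real and imaginary parts of V(1), where V(t) = int e^(-u^2) / (t z - i u) du.
   Differentiating under the integral sign and integrating by parts in u gives
   V'(t) = 2 t z^2 V(t) - 2 G z with G = int e^(-u^2) du, and t |-> G sqrt(pi) erfcx(t z) solves
   the same linear equation, so their difference times e^(-(t z)^2) is constant.  As t -> 0+
   the kernel becomes a Cauchy kernel of vanishing width, so V(t) -> pi; this identifies the
   constant and gives V(1) = (pi - G sqrt(pi)) e^(z^2) + G sqrt(pi) erfcx(z).  For real z the
   bounds 0 < V(1) <= G / p then force G^2 = pi, hence V(1) = pi erfcx(z). *)

From Stdlib Require Import Reals Lra.
From Coquelicot Require Import Coquelicot.
Open Scope R_scope.

(** * Improper Riemann integrals over the real line *)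

Definition is_improper_RInt (f : R -> R) (l : R) : Prop :=
  (forall a b, ex_RInt f a b) /\
  (forall eps, 0 < eps -> exists M, forall a b, a < - M -> M < b ->
     Rabs (RInt f a b - l) < eps).

Definition improper_RInt (f : R -> R) : R :=
  RInt_gen f (Rbar_locally m_infty) (Rbar_locally p_infty).

Lemma Rabs_bounds_le (M : R) : - Rabs M <= M <= Rabs M /\ - Rabs M <= - M <= Rabs M.
Proof. pose proof (Rle_abs M); pose proof (Rle_abs (- M)); rewrite Rabs_Ropp in *; lra. Qed.

Lemma is_improper_RInt_plus (f g : R -> R) (lf lg : R) :
  is_improper_RInt f lf -> is_improper_RInt g lg ->
  is_improper_RInt (fun u => f u + g u) (lf + lg).
Proof.
  intros [Ef Lf] [Eg Lg]. split.
  - intros a b. apply (ex_RInt_plus f g); auto.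
  - intros eps He. destruct (Lf (eps / 2)) as [M1 HM1]; [lra|].
    destruct (Lg (eps / 2)) as [M2 HM2]; [lra|].
    exists (Rmax M1 M2); intros a b Ha Hb.
    pose proof (Rmax_l M1 M2); pose proof (Rmax_r M1 M2).
    specialize (HM1 a b ltac:(lra) ltac:(lra)). specialize (HM2 a b ltac:(lra) ltac:(lra)).
    replace (RInt (fun u => f u + g u) a b) with (RInt f a b + RInt g a b)
      by (symmetry; exact (RInt_plus f g a b (Ef a b) (Eg a b))).
    replace (RInt f a b + RInt g a b - (lf + lg)) with ((RInt f a b - lf) + (RInt g a b - lg)) by ring.
    eapply Rle_lt_trans; [apply Rabs_triang | lra].
Qed.

Lemma is_improper_RInt_le (f g : R -> R) (lf lg : R) :
  is_improper_RInt f lf -> is_improper_RInt g lg -> (forall u, f u <= g u) -> lf <= lg.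
Proof.
  intros [Ef Lf] [Eg Lg] Hfg.
  apply Rnot_lt_le; intros Hlt.
  destruct (Lf ((lf - lg) / 2)) as [M1 HM1]; [lra|].
  destruct (Lg ((lf - lg) / 2)) as [M2 HM2]; [lra|].
  set (M := Rabs M1 + Rabs M2 + 1).
  pose proof (Rabs_bounds_le M1); pose proof (Rabs_bounds_le M2).
  specialize (HM1 (- M) M ltac:(unfold M; lra) ltac:(unfold M; lra)).
  specialize (HM2 (- M) M ltac:(unfold M; lra) ltac:(unfold M; lra)).
  assert (RInt f (- M) M <= RInt g (- M) M) by (apply RInt_le; auto; unfold M; lra).
  apply Rabs_def2 in HM1; apply Rabs_def2 in HM2. lra.
Qed.

Lemma is_improper_RInt_ext (f g : R -> R) (l : R) :
  (forall u, f u = g u) -> is_improper_RInt f l -> is_improper_RInt g l.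
Proof.
  intros Efg [Ef Lf]. split.
  - intros a b. apply (ex_RInt_ext f g); auto.
  - intros eps He. destruct (Lf eps He) as [M HM]. exists M; intros a b Ha Hb.
    rewrite <- (RInt_ext f g); auto.
Qed.

Lemma is_improper_RInt_scal (f : R -> R) (k l : R) :
  is_improper_RInt f l -> is_improper_RInt (fun u => k * f u) (k * l).
Proof.
  intros [Ef Lf]. split.
  - intros a b. apply (ex_RInt_scal f); auto.
  - intros eps He. destruct (Lf (eps / (Rabs k + 1))) as [M HM].
    { apply Rdiv_lt_0_compat; auto. pose proof (Rabs_pos k); lra. }
    exists M; intros a b Ha Hb. specialize (HM a b Ha Hb).
    replace (RInt (fun u => k * f u) a b) with (k * RInt f a b)
      by (symmetry; exact (RInt_scal f a b k (Ef a b))).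
    replace (k * RInt f a b - k * l) with (k * (RInt f a b - l)) by ring.
    rewrite Rabs_mult. pose proof (Rabs_pos k); pose proof (Rabs_pos (RInt f a b - l)).
    apply Rle_lt_trans with ((Rabs k + 1) * Rabs (RInt f a b - l)); [nra|].
    replace eps with ((Rabs k + 1) * (eps / (Rabs k + 1))) by (field; lra).
    apply Rmult_lt_compat_l; lra.
Qed.

Lemma is_improper_RInt_opp (f : R -> R) (l : R) :
  is_improper_RInt f l -> is_improper_RInt (fun u => - f u) (- l).
Proof.
  intros H. apply (is_improper_RInt_ext (fun u => -1 * f u)); [intros; ring|].
  replace (- l) with (-1 * l) by ring. now apply is_improper_RInt_scal.
Qed.

Lemma is_improper_RInt_minus (f g : R -> R) (lf lg : R) :
  is_improper_RInt f lf -> is_improper_RInt g lg ->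
  is_improper_RInt (fun u => f u - g u) (lf - lg).
Proof.
  intros Hf Hg. apply (is_improper_RInt_ext (fun u => f u + - g u)); [intros; ring|].
  now apply is_improper_RInt_plus, is_improper_RInt_opp.
Qed.

Lemma is_improper_RInt_const0 : is_improper_RInt (fun _ => 0) 0.
Proof.
  split.
  - intros a b. apply ex_RInt_const.
  - intros eps He. exists 0. intros a b _ _.
    rewrite RInt_const. unfold scal; simpl; unfold mult; simpl.
    rewrite Rmult_0_r, Rminus_0_r, Rabs_R0. exact He.
Qed.

Lemma is_improper_RInt_abs_le (f g : R -> R) (lf lg : R) :
  (forall u, Rabs (f u) <= g u) -> is_improper_RInt f lf -> is_improper_RInt g lg ->
  Rabs lf <= lg.
Proof.
  intros Hfg Hf Hg. apply Rabs_le; split.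
  - cut (- lg <= lf); [lra|].
    apply (is_improper_RInt_le (fun u => - g u) f); auto using is_improper_RInt_opp.
    intros u; specialize (Hfg u); apply Rabs_le_between in Hfg; lra.
  - apply (is_improper_RInt_le f g); auto.
    intros u; eapply Rle_trans; [apply Rle_abs | apply Hfg].
Qed.

Lemma is_improper_RInt_ge_RInt (f : R -> R) (l a b : R) :
  (forall u, 0 <= f u) -> is_improper_RInt f l -> a <= b -> RInt f a b <= l.
Proof.
  intros Hpos [Ef Lf] Hab. apply Rnot_lt_le. intros Hlt.
  destruct (Lf (RInt f a b - l)) as [M HM]; [lra|].
  set (A := Rabs M + Rabs a + Rabs b + 1).
  pose proof (Rabs_bounds_le M); pose proof (Rabs_bounds_le a); pose proof (Rabs_bounds_le b).
  specialize (HM (- A) A ltac:(unfold A; lra) ltac:(unfold A; lra)).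
  rewrite <- (RInt_Chasles f (- A) a A), <- (RInt_Chasles f a b A) in HM by auto.
  assert (0 <= RInt f (- A) a) by (apply RInt_ge_0; auto; unfold A; lra).
  assert (0 <= RInt f b A) by (apply RInt_ge_0; auto; unfold A; lra).
  apply Rabs_def2 in HM. unfold plus in HM; simpl in HM. lra.
Qed.

Lemma is_improper_RInt_unique (f : R -> R) (l : R) :
  is_improper_RInt f l -> improper_RInt f = l.
Proof.
  intros [Ef Lf]. apply is_RInt_gen_unique.
  intros P [eps HP]. destruct (Lf eps (cond_pos eps)) as [M HM].
  apply (Filter_prod _ _ _ (fun a => a < - M) (fun b => M < b)); [exists (- M) | exists M |]; auto.
  intros a b Ha Hb. exists (RInt f a b). split; [apply RInt_correct, Ef | apply HP, HM; auto].
Qed.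

Lemma filterlim_RInt_symmetric (f : R -> R) (l : R) :
  is_improper_RInt f l -> filterlim (fun r => RInt f (- r) r) (Rbar_locally p_infty) (locally l).
Proof.
  intros [_ Lf]. apply filterlim_locally. intros eps.
  destruct (Lf eps (cond_pos eps)) as [M HM]. exists (Rabs M). intros r Hr.
  pose proof (Rabs_bounds_le M). apply HM; lra.
Qed.

Lemma Rabs_RInt_le_dominated (f g : R -> R) (a b : R) :
  (forall u, Rabs (f u) <= g u) -> ex_RInt f a b -> ex_RInt g a b ->
  Rabs (RInt f a b) <= Rabs (RInt g a b).
Proof.
  intros Hfg.
  assert (K : forall a b, a <= b -> ex_RInt f a b -> ex_RInt g a b ->
    Rabs (RInt f a b) <= Rabs (RInt g a b)).
  { intros a' b' Hab Ef Eg. eapply Rle_trans; [|apply Rle_abs].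
    exact (norm_RInt_le f g a' b' _ _ Hab (fun u _ => Hfg u)
             (RInt_correct f a' b' Ef) (RInt_correct g a' b' Eg)). }
  intros Ef Eg. destruct (Rle_dec a b) as [Hab|Hab]; [now apply K|].
  rewrite <- (opp_RInt_swap f b a (ex_RInt_swap _ _ _ Ef)),
    <- (opp_RInt_swap g b a (ex_RInt_swap _ _ _ Eg)).
  unfold opp; simpl; rewrite !Rabs_Ropp.
  apply K; try lra; now apply ex_RInt_swap.
Qed.

Lemma is_improper_RInt_of_filterlim (f : R -> R) (l : R) : (forall a b, ex_RInt f a b) ->
  filterlim (fun ab : R * R => RInt f (fst ab) (snd ab))
    (filter_prod (Rbar_locally m_infty) (Rbar_locally p_infty)) (locally l) ->
  is_improper_RInt f l.
Proof.
  intros Ef Hl. split; auto. intros eps He.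
  destruct (proj1 (filterlim_locally _ l) Hl (mkposreal eps He)) as [Q P [M1 HQ] [M2 HP] HQP].
  exists (Rabs M1 + Rabs M2). intros a b Ha Hb.
  pose proof (Rabs_bounds_le M1); pose proof (Rabs_bounds_le M2).
  apply (HQP a b); [apply HQ | apply HP]; lra.
Qed.

Lemma is_improper_RInt_dominated (f g : R -> R) (lg : R) :
  (forall a b, ex_RInt f a b) -> (forall u, Rabs (f u) <= g u) ->
  is_improper_RInt g lg -> is_improper_RInt f (improper_RInt f).
Proof.
  intros Ef Hfg [Eg Lg].
  set (F := filter_prod (Rbar_locally m_infty) (Rbar_locally p_infty)).
  assert (FF : ProperFilter F) by (apply filter_prod_proper; apply Rbar_locally_filter).
  (* Cauchy criterion: the tails of [f] are dominated by those of [g]. *)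
  destruct (proj1 (filterlim_locally_cauchy (F := F) (fun ab : R * R => RInt f (fst ab) (snd ab))))
    as [l Hl].
  - intros eps. destruct (Lg (eps / 4)) as [M HM]; [destruct eps; simpl; lra|].
    exists (fun ab : R * R => fst ab < - Rabs M - 1 /\ Rabs M + 1 < snd ab). split.
    + apply (Filter_prod _ _ _ (fun a => a < - Rabs M - 1) (fun b => Rabs M + 1 < b));
        [exists (- Rabs M - 1) | exists (Rabs M + 1) | ]; auto.
    + intros [a b] [a' b'] [Ha Hb] [Ha' Hb']; simpl in *.
      pose proof (Rabs_bounds_le M).
      assert (A1 := HM a b ltac:(lra) ltac:(lra)).
      assert (A2 := HM a' b ltac:(lra) ltac:(lra)).
      assert (A3 := HM a' b' ltac:(lra) ltac:(lra)).
      assert (A4 := A2).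
      rewrite <- (RInt_Chasles g a a' b) in A1 by auto.
      rewrite <- (RInt_Chasles g a' b' b) in A4 by auto.
      unfold plus in A1, A4; simpl in A1, A4.
      apply Rabs_def2 in A1, A2, A3, A4.
      assert (Ga : Rabs (RInt g a a') < eps / 2) by (apply Rabs_def1; lra).
      assert (Gb : Rabs (RInt g b' b) < eps / 2) by (apply Rabs_def1; lra).
      assert (Fa := Rabs_RInt_le_dominated f g a a' Hfg (Ef _ _) (Eg _ _)).
      assert (Fb := Rabs_RInt_le_dominated f g b' b Hfg (Ef _ _) (Eg _ _)).
      change (Rabs (RInt f a' b' - RInt f a b) < eps).
      rewrite <- (RInt_Chasles f a a' b), <- (RInt_Chasles f a' b' b) by auto.
      unfold plus; simpl.
      replace (RInt f a' b' - (RInt f a a' + (RInt f a' b' + RInt f b' b)))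
        with (- (RInt f a a' + RInt f b' b)) by ring.
      rewrite Rabs_Ropp. eapply Rle_lt_trans; [apply Rabs_triang|]. destruct eps; simpl in *; lra.
  - assert (Hl' : is_improper_RInt f l) by now apply is_improper_RInt_of_filterlim.
    now rewrite (is_improper_RInt_unique f l Hl').
Qed.

Lemma is_improper_RInt_comp_lin (f : R -> R) (l al be : R) : be <> 0 ->
  is_improper_RInt f l -> is_improper_RInt (fun t => Rabs be * f (al + be * t)) l.
Proof.
  intros Hbe [Ef Lf].
  assert (Hab : 0 < Rabs be) by now apply Rabs_pos_lt.
  assert (E : forall a b, is_RInt (fun t => be * f (al + be * t)) a b
                (RInt f (be * a + al) (be * b + al))).
  { intros a b. eapply is_RInt_ext;
      [|apply (is_RInt_comp_lin f be al a b), (RInt_correct (V := R_CompleteNormedModule)), Ef].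
    intros t _. unfold scal; simpl; unfold mult; simpl. now rewrite (Rplus_comm al). }
  (* For [be < 0] the substitution reverses the orientation of the interval. *)
  assert (E' : forall a b, is_RInt (fun t => Rabs be * f (al + be * t)) a b
      (if Rle_dec 0 be then RInt f (be * a + al) (be * b + al)
       else RInt f (be * b + al) (be * a + al))).
  { intros a b. destruct (Rle_dec 0 be) as [Hp|Hn].
    - rewrite Rabs_pos_eq by lra. apply E.
    - rewrite Rabs_left by lra.
      replace (RInt f (be * b + al) (be * a + al)) with (- RInt f (be * a + al) (be * b + al))
        by exact (opp_RInt_swap f _ _ (Ef _ _)).
      eapply is_RInt_ext; [|exact (is_RInt_opp _ _ _ _ (E a b))].
      intros t _. unfold opp; simpl; ring. }
  split; [intros a b; eexists; apply E'|].
  intros eps He. destruct (Lf eps He) as [M HM].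
  exists ((Rabs M + Rabs al) / Rabs be). intros a b Ha Hb.
  rewrite (is_RInt_unique _ a b _ (E' a b)).
  pose proof (Rabs_bounds_le M); pose proof (Rabs_bounds_le al).
  assert (Hba : Rabs be * a < - (Rabs M + Rabs al)).
  { replace (- (Rabs M + Rabs al)) with (Rabs be * (- ((Rabs M + Rabs al) / Rabs be))) by (field; lra).
    now apply Rmult_lt_compat_l. }
  assert (Hbb : Rabs M + Rabs al < Rabs be * b).
  { replace (Rabs M + Rabs al) with (Rabs be * ((Rabs M + Rabs al) / Rabs be)) by (field; lra).
    now apply Rmult_lt_compat_l. }
  destruct (Rle_dec 0 be) as [Hp|Hn].
  - rewrite (Rabs_pos_eq be) in Hba, Hbb by lra. apply HM; lra.
  - rewrite (Rabs_left be) in Hba, Hbb by lra. apply HM; lra.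
Qed.

Lemma is_improper_RInt_comp_refl (f : R -> R) (l al : R) :
  is_improper_RInt f l -> is_improper_RInt (fun t => f (al - t)) l.
Proof.
  intros H. eapply is_improper_RInt_ext; [|apply (is_improper_RInt_comp_lin f l al (-1)); auto; lra].
  intros t; cbv beta. rewrite Rabs_left by lra.
  replace (al + -1 * t) with (al - t) by ring. ring.
Qed.

Lemma is_improper_RInt_derive_vanishing (g g' : R -> R) :
  (forall u, is_derive g u (g' u)) -> (forall u, continuous g' u) ->
  (forall eps, 0 < eps -> exists M, forall u, M < Rabs u -> Rabs (g u) < eps) ->
  is_improper_RInt g' 0.
Proof.
  intros Hd Hc Hlim.
  assert (E : forall a b, is_RInt g' a b (g b - g a))
    by (intros a b; exact (is_RInt_derive g g' a b (fun u _ => Hd u) (fun u _ => Hc u))).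
  split; [intros a b; eexists; apply E|].
  intros eps He. destruct (Hlim (eps / 2)) as [M HM]; [lra|].
  exists (Rabs M). intros a b Ha Hb.
  rewrite (is_RInt_unique _ _ _ _ (E a b)).
  pose proof (Rabs_bounds_le M).
  assert (A := HM a ltac:(rewrite Rabs_left; lra)).
  assert (B := HM b ltac:(rewrite Rabs_right; lra)).
  apply Rabs_def2 in A, B. apply Rabs_def1; lra.
Qed.

Lemma is_derive_improper_RInt (f : R -> R -> R) (F d B : R -> R) (LB Ld t del : R) :
  0 < del ->
  (forall s, Rabs (s - t) < del -> is_improper_RInt (f s) (F s)) ->
  is_improper_RInt d Ld -> is_improper_RInt B LB ->
  (forall h u, Rabs h < del -> Rabs (f (t + h) u - f t u - h * d u) <= h ^ 2 * B u) ->
  is_derive F t Ld.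
Proof.
  intros Hdel HF Hd HB Hrem. apply is_derive_Reals. intros eps He.
  assert (HL : 0 < Rabs LB + 1) by (pose proof (Rabs_pos LB); lra).
  assert (Hd' : 0 < Rmin del (eps / (Rabs LB + 1)))
    by (apply Rmin_glb_lt; auto; apply Rdiv_lt_0_compat; auto).
  exists (mkposreal _ Hd'). intros h Hh0 Hh. simpl in Hh.
  pose proof (Rmin_l del (eps / (Rabs LB + 1))); pose proof (Rmin_r del (eps / (Rabs LB + 1))).
  assert (K : Rabs (F (t + h) - F t - h * Ld) <= h ^ 2 * LB).
  { apply (is_improper_RInt_abs_le (fun u => f (t + h) u - f t u - h * d u) (fun u => h ^ 2 * B u)).
    - intros u. apply Hrem; lra.
    - apply is_improper_RInt_minus; [apply is_improper_RInt_minus|]; auto using is_improper_RInt_scal.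
      + apply HF. replace (t + h - t) with h by ring; lra.
      + apply HF. rewrite Rminus_diag, Rabs_R0; lra.
    - now apply is_improper_RInt_scal. }
  assert (Hh3 : 0 < Rabs h) by now apply Rabs_pos_lt.
  replace ((F (t + h) - F t) / h - Ld) with ((F (t + h) - F t - h * Ld) / h) by (field; auto).
  unfold Rdiv; rewrite Rabs_mult, Rabs_inv, <- pow2_abs in *.
  apply Rle_lt_trans with (Rabs h * (Rabs LB + 1)).
  - apply Rmult_le_reg_r with (Rabs h); auto.
    rewrite Rmult_assoc, Rinv_l by lra.
    pose proof (Rle_abs LB). nra.
  - replace eps with (eps / (Rabs LB + 1) * (Rabs LB + 1)) by (field; lra).
    apply Rmult_lt_compat_r; lra.
Qed.

(** * The Cauchy and Gaussian integrals *)

Lemma atan_near_PI2 (eps : R) : 0 < eps -> exists M, forall x, M < x -> PI / 2 - atan x < eps.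
Proof.
  intros He. pose proof (Rmin_l eps 1); pose proof (Rmin_r eps 1); pose proof PI2_3_2.
  assert (0 < Rmin eps 1) by (apply Rmin_glb_lt; lra).
  exists (tan (PI / 2 - Rmin eps 1)). intros x Hx.
  apply atan_increasing in Hx. rewrite atan_tan in Hx by lra. lra.
Qed.

Lemma is_improper_RInt_inv_one_plus_sq : is_improper_RInt (fun u => / (1 + u ^ 2)) PI.
Proof.
  assert (E : forall a b, is_RInt (fun u => / (1 + u ^ 2)) a b (atan b - atan a)).
  { intros a b. apply (is_RInt_derive atan).
    - intros u _. apply is_derive_Reals, derivable_pt_lim_atan.
    - intros u _. apply (ex_derive_continuous (V := R_NormedModule)).
      auto_derive. pose proof (pow2_ge_0 u); lra. }
  split; [intros a b; eexists; apply E|].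
  intros eps He. destruct (atan_near_PI2 (eps / 2)) as [M HM]; [lra|].
  exists M. intros a b Ha Hb.
  rewrite (is_RInt_unique _ _ _ _ (E a b)).
  assert (A := HM b Hb). assert (B := HM (- a) ltac:(lra)). rewrite atan_opp in B.
  pose proof (atan_bound a); pose proof (atan_bound b).
  apply Rabs_def1; lra.
Qed.

Lemma is_improper_RInt_Cauchy (e c : R) : 0 < e ->
  is_improper_RInt (fun u => e / (e ^ 2 + (u - c) ^ 2)) PI.
Proof.
  intros He.
  eapply is_improper_RInt_ext;
    [|apply (is_improper_RInt_comp_lin (fun u => / (1 + u ^ 2)) PI (- c / e) (/ e));
      [|apply is_improper_RInt_inv_one_plus_sq]].
  - intros u; cbv beta. rewrite Rabs_pos_eq by (apply Rlt_le, Rinv_0_lt_compat; lra).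
    pose proof (pow2_ge_0 (u - c)). field. split; nra.
  - apply Rinv_neq_0_compat; lra.
Qed.

Lemma exp_le_compat (x y : R) : x <= y -> exp x <= exp y.
Proof. intros [H|H]; [now left; apply exp_increasing | subst; lra]. Qed.

Definition gau (u : R) : R := exp (- u ^ 2).

Lemma gau_pos (u : R) : 0 < gau u.
Proof. apply exp_pos. Qed.

Lemma gau_le_1 (u : R) : gau u <= 1.
Proof. rewrite <- exp_0. apply exp_le_compat. pose proof (pow2_ge_0 u); lra. Qed.

Lemma one_minus_sq_le_gau (u : R) : 1 - u ^ 2 <= gau u.
Proof. pose proof (exp_ineq1_le (- u ^ 2)). unfold gau; lra. Qed.

Lemma gau_le_Cauchy (u : R) : gau u <= / (1 + u ^ 2).
Proof.
  pose proof (exp_ineq1_le (u ^ 2)); pose proof (pow2_ge_0 u).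
  unfold gau. rewrite exp_Ropp. apply Rinv_le_contravar; lra.
Qed.

Lemma continuous_gau (u : R) : continuous gau u.
Proof. apply (ex_derive_continuous (V := R_NormedModule)). unfold gau. auto_derive. auto. Qed.

Lemma ex_RInt_gau (a b : R) : ex_RInt gau a b.
Proof. apply (ex_RInt_continuous (V := R_CompleteNormedModule)). intros; apply continuous_gau. Qed.

Definition gauss_integral : R := improper_RInt gau.

Lemma is_improper_RInt_gau : is_improper_RInt gau gauss_integral.
Proof.
  apply (is_improper_RInt_dominated gau (fun u => / (1 + u ^ 2)) PI).
  - apply ex_RInt_gau.
  - intros u. rewrite Rabs_pos_eq by (left; apply gau_pos). apply gau_le_Cauchy.
  - apply is_improper_RInt_inv_one_plus_sq.
Qed.

Lemma gauss_integral_nonneg : 0 <= gauss_integral.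
Proof.
  apply (is_improper_RInt_le (fun _ => 0) gau);
    auto using is_improper_RInt_const0, is_improper_RInt_gau.
  intros u; left; apply gau_pos.
Qed.

Lemma gau_vanishing (C eps : R) : 0 < eps ->
  exists M, forall u, M < Rabs u -> C * gau u < eps.
Proof.
  intros He. exists (Rabs C / eps). intros u Hu.
  pose proof (gau_le_Cauchy u); pose proof (gau_pos u); pose proof (Rle_abs C).
  assert (Hq : 0 <= Rabs C / eps) by (apply Rdiv_le_0_compat; [apply Rabs_pos | lra]).
  assert (HC : Rabs C < eps * (1 + u ^ 2)).
  { rewrite <- pow2_abs.
    assert (Rabs u <= 1 + Rabs u ^ 2) by (pose proof (pow2_ge_0 (Rabs u - 1)); nra).
    replace (Rabs C) with (eps * (Rabs C / eps)) by (field; lra). nra. }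
  apply Rle_lt_trans with (Rabs C * / (1 + u ^ 2)).
  - apply Rle_trans with (Rabs C * gau u); [nra|]. apply Rmult_le_compat_l; auto using Rabs_pos.
  - pose proof (pow2_ge_0 u).
    apply Rmult_lt_reg_r with (1 + u ^ 2); [lra|].
    rewrite Rmult_assoc, Rinv_l by lra. lra.
Qed.

Lemma is_improper_RInt_gau_shifted (c : R) :
  is_improper_RInt (fun u => exp (- (u - c) ^ 2 / 2)) (sqrt 2 * gauss_integral).
Proof.
  assert (Hs : 0 < sqrt 2) by (apply sqrt_lt_R0; lra).
  assert (Hs2 : sqrt 2 * sqrt 2 = 2) by (apply sqrt_sqrt; lra).
  eapply is_improper_RInt_ext; [|apply is_improper_RInt_scal with (k := sqrt 2),
    (is_improper_RInt_comp_lin gau _ (- c / sqrt 2) (/ sqrt 2)), is_improper_RInt_gau].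
  - intros u; cbv beta. unfold gau.
    rewrite Rabs_pos_eq by (apply Rlt_le, Rinv_0_lt_compat; lra).
    replace (- (- c / sqrt 2 + / sqrt 2 * u) ^ 2) with (- (u - c) ^ 2 / (sqrt 2 * sqrt 2))
      by (field; lra).
    rewrite Hs2. field; lra.
  - apply Rinv_neq_0_compat; lra.
Qed.

(** * Complex-valued functions of a real variable *)

Definition is_derive_C (f : R -> C) (t : R) (d : C) : Prop :=
  is_derive (fun s => Re (f s)) t (Re d) /\ is_derive (fun s => Im (f s)) t (Im d).

Lemma is_derive_C_ext (f g : R -> C) (t : R) (d : C) :
  (forall s, f s = g s) -> is_derive_C f t d -> is_derive_C g t d.
Proof.
  intros E [H1 H2]; split; eapply is_derive_ext; eauto; intros s; simpl; now rewrite E.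
Qed.

Lemma is_derive_C_eq (f : R -> C) (t : R) (d d' : C) :
  is_derive_C f t d -> d = d' -> is_derive_C f t d'.
Proof. now intros H <-. Qed.

Lemma is_derive_C_const (k : C) (t : R) : is_derive_C (fun _ => k) t 0%C.
Proof. split; apply (is_derive_const (V := R_NormedModule)). Qed.

Lemma is_derive_C_plus (f g : R -> C) (t : R) (df dg : C) :
  is_derive_C f t df -> is_derive_C g t dg ->
  is_derive_C (fun s => f s + g s)%C t (df + dg)%C.
Proof.
  intros [H1 H2] [K1 K2].
  split; [exact (is_derive_plus (V := R_NormedModule) _ _ _ _ _ H1 K1)
         | exact (is_derive_plus (V := R_NormedModule) _ _ _ _ _ H2 K2)].
Qed.

Lemma is_derive_C_minus (f g : R -> C) (t : R) (df dg : C) :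
  is_derive_C f t df -> is_derive_C g t dg ->
  is_derive_C (fun s => f s - g s)%C t (df - dg)%C.
Proof.
  intros [H1 H2] [K1 K2].
  split; [exact (is_derive_minus (V := R_NormedModule) _ _ _ _ _ H1 K1)
         | exact (is_derive_minus (V := R_NormedModule) _ _ _ _ _ H2 K2)].
Qed.

Lemma is_derive_C_mult (f g : R -> C) (t : R) (df dg : C) :
  is_derive_C f t df -> is_derive_C g t dg ->
  is_derive_C (fun s => f s * g s)%C t (df * g t + f t * dg)%C.
Proof.
  intros [H1 H2] [K1 K2].
  assert (M : forall (u v : R -> R) du dv, is_derive u t du -> is_derive v t dv ->
    is_derive (fun s => u s * v s) t (du * v t + u t * dv))
    by (intros u v du dv Hu Hv; exact (is_derive_mult (K := R_AbsRing) u v t du dv Hu Hv Rmult_comm)).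
  split; simpl.
  - replace (fst df * fst (g t) - snd df * snd (g t) + (fst (f t) * fst dg - snd (f t) * snd dg))
      with ((fst df * fst (g t) + fst (f t) * fst dg) - (snd df * snd (g t) + snd (f t) * snd dg))
      by ring.
    apply (is_derive_minus (V := R_NormedModule)); now apply M.
  - replace (fst df * snd (g t) + snd df * fst (g t) + (fst (f t) * snd dg + snd (f t) * fst dg))
      with ((fst df * snd (g t) + fst (f t) * snd dg) + (snd df * fst (g t) + snd (f t) * fst dg))
      by ring.
    apply (is_derive_plus (V := R_NormedModule)); now apply M.
Qed.

Lemma continuous_of_is_derive_C (f : R -> C) (t : R) (d : C) :
  is_derive_C f t d -> continuous (fun s => Re (f s)) t /\ continuous (fun s => Im (f s)) t.
Proof.
  intros [H1 H2]; split; apply (ex_derive_continuous (V := R_NormedModule)); eexists; eauto.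
Qed.

Lemma is_derive_C_zero_constant (f : R -> C) (a b : R) :
  a <= b -> (forall t, a <= t <= b -> is_derive_C f t 0%C) -> f a = f b.
Proof.
  intros Hab Hd.
  assert (K : forall u : R -> R, (forall t, a <= t <= b -> is_derive u t 0) -> u a = u b).
  { intros u Hu. destruct (MVT_gen u a b (fun _ => 0)) as [c [_ Hc]].
    - intros x Hx. rewrite Rmin_left, Rmax_right in Hx by lra. apply Hu; lra.
    - intros x Hx. rewrite Rmin_left, Rmax_right in Hx by lra.
      apply continuity_pt_filterlim, (ex_derive_continuous (V := R_NormedModule)).
      exists 0. apply Hu; lra.
    - lra. }
  apply injective_projections; [apply (K (fun s => Re (f s))) | apply (K (fun s => Im (f s)))];
    intros t Ht; apply (Hd t Ht).
Qed.

Lemma cexp_opp_r (w : C) : (cexp w * cexp (- w) = 1)%C.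
Proof.
  destruct w as [a b]. unfold cexp, Copp, Cmult; simpl.
  rewrite cos_neg, sin_neg.
  assert (E : exp a * exp (- a) = 1) by (rewrite <- exp_plus, Rplus_opp_r; apply exp_0).
  pose proof (sin2_cos2 b) as S. unfold Rsqr in S.
  apply injective_projections; simpl.
  - transitivity ((exp a * exp (- a)) * (sin b * sin b + cos b * cos b)); [ring|].
    rewrite E, S; ring.
  - ring.
Qed.

Lemma cexp_sq (s a b : R) : cexp (RtoC s * (a, b) * (RtoC s * (a, b)))%C =
  (exp (s * s * (a * a - b * b)) * cos (s * s * (2 * a * b)),
   exp (s * s * (a * a - b * b)) * sin (s * s * (2 * a * b))).
Proof. unfold cexp, RtoC, Cmult; simpl. f_equal; f_equal; f_equal; ring. Qed.

Lemma is_derive_C_cexp_sq (w : C) (t : R) :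
  is_derive_C (fun s => cexp (RtoC s * w * (RtoC s * w)))%C t
    (RtoC (2 * t) * (w * w) * cexp (RtoC t * w * (RtoC t * w)))%C.
Proof.
  destruct w as [a b].
  eapply is_derive_C_ext; [intros s; symmetry; apply cexp_sq|]. rewrite cexp_sq.
  split; simpl; auto_derive; auto; ring.
Qed.

Definition is_improper_CRInt (f : R -> C) (l : C) : Prop :=
  is_improper_RInt (fun u => Re (f u)) (Re l) /\ is_improper_RInt (fun u => Im (f u)) (Im l).

Definition improper_CRInt (f : R -> C) : C :=
  (improper_RInt (fun u => Re (f u)), improper_RInt (fun u => Im (f u))).

Lemma Rabs_Im_le_Cmod (w : C) : Rabs (Im w) <= Cmod w.
Proof. eapply Rle_trans; [apply Rmax_r | apply Rmax_Cmod]. Qed.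

Lemma is_improper_CRInt_ext (f g : R -> C) (l : C) :
  (forall u, f u = g u) -> is_improper_CRInt f l -> is_improper_CRInt g l.
Proof.
  intros E [H1 H2]; split; eapply is_improper_RInt_ext; eauto; intros u; simpl; now rewrite E.
Qed.

Lemma is_improper_CRInt_plus (f g : R -> C) (lf lg : C) :
  is_improper_CRInt f lf -> is_improper_CRInt g lg ->
  is_improper_CRInt (fun u => f u + g u)%C (lf + lg)%C.
Proof. intros [F1 F2] [G1 G2]; split; now apply is_improper_RInt_plus. Qed.

Lemma is_improper_CRInt_minus (f g : R -> C) (lf lg : C) :
  is_improper_CRInt f lf -> is_improper_CRInt g lg ->
  is_improper_CRInt (fun u => f u - g u)%C (lf - lg)%C.
Proof. intros [F1 F2] [G1 G2]; split; now apply is_improper_RInt_minus. Qed.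

Lemma is_improper_CRInt_scal (c : C) (f : R -> C) (l : C) :
  is_improper_CRInt f l -> is_improper_CRInt (fun u => c * f u)%C (c * l)%C.
Proof.
  intros [F1 F2]; split; simpl.
  - apply is_improper_RInt_minus; now apply is_improper_RInt_scal.
  - apply is_improper_RInt_plus; now apply is_improper_RInt_scal.
Qed.

Lemma is_improper_CRInt_RtoC (g : R -> R) (l : R) :
  is_improper_RInt g l -> is_improper_CRInt (fun u => RtoC (g u)) (RtoC l).
Proof. intros H; split; simpl; auto using is_improper_RInt_const0. Qed.

Lemma is_improper_CRInt_dominated (f : R -> C) (g : R -> R) (lg : R) :
  (forall u, continuous (fun s => Re (f s)) u /\ continuous (fun s => Im (f s)) u) ->
  (forall u, Cmod (f u) <= g u) -> is_improper_RInt g lg ->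
  is_improper_CRInt f (improper_CRInt f).
Proof.
  intros Hc Hfg Hg. split; apply (is_improper_RInt_dominated _ g lg); auto.
  - intros a b. apply (ex_RInt_continuous (V := R_CompleteNormedModule)). intros u _; apply Hc.
  - intros u. eapply Rle_trans; [apply re_le_Cmod | apply Hfg].
  - intros a b. apply (ex_RInt_continuous (V := R_CompleteNormedModule)). intros u _; apply Hc.
  - intros u. eapply Rle_trans; [apply Rabs_Im_le_Cmod | apply Hfg].
Qed.

Lemma is_improper_CRInt_derive_vanishing (w w' : R -> C) :
  (forall u, is_derive_C w u (w' u)) ->
  (forall u, continuous (fun s => Re (w' s)) u /\ continuous (fun s => Im (w' s)) u) ->
  (forall eps, 0 < eps -> exists M, forall u, M < Rabs u -> Cmod (w u) < eps) ->
  is_improper_CRInt w' 0%C.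
Proof.
  intros Hd Hc Hlim. split.
  - apply (is_improper_RInt_derive_vanishing (fun u => Re (w u))); [apply Hd | apply Hc|].
    intros eps He; destruct (Hlim eps He) as [M HM]; exists M; intros u Hu.
    eapply Rle_lt_trans; [apply re_le_Cmod | apply (HM u Hu)].
  - apply (is_improper_RInt_derive_vanishing (fun u => Im (w u))); [apply Hd | apply Hc|].
    intros eps He; destruct (Hlim eps He) as [M HM]; exists M; intros u Hu.
    eapply Rle_lt_trans; [apply Rabs_Im_le_Cmod | apply (HM u Hu)].
Qed.

Lemma is_derive_C_improper_CRInt (f : R -> R -> C) (F d : R -> C) (B : R -> R)
    (Ld : C) (LB t del : R) :
  0 < del ->
  (forall s, Rabs (s - t) < del -> is_improper_CRInt (f s) (F s)) ->
  is_improper_CRInt d Ld -> is_improper_RInt B LB ->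
  (forall h u, Rabs h < del -> Cmod (f (t + h)%R u - f t u - RtoC h * d u)%C <= h ^ 2 * B u) ->
  is_derive_C F t Ld.
Proof.
  intros Hdel HF [D1 D2] HB Hrem. split.
  - refine (is_derive_improper_RInt (fun s u => Re (f s u)) (fun s => Re (F s))
              (fun u => Re (d u)) B LB (Re Ld) t del Hdel _ D1 HB _).
    + intros s Hs; exact (proj1 (HF s Hs)).
    + intros h u Hh. eapply Rle_trans; [|apply (Hrem h u Hh)].
      replace (Re (f (t + h) u) - Re (f t u) - h * Re (d u))
        with (Re (f (t + h)%R u - f t u - RtoC h * d u)%C) by (unfold RtoC, Re, Im; simpl; ring).
      apply re_le_Cmod.
  - refine (is_derive_improper_RInt (fun s u => Im (f s u)) (fun s => Im (F s))
              (fun u => Im (d u)) B LB (Im Ld) t del Hdel _ D2 HB _).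
    + intros s Hs; exact (proj2 (HF s Hs)).
    + intros h u Hh. eapply Rle_trans; [|apply (Hrem h u Hh)].
      replace (Im (f (t + h) u) - Im (f t u) - h * Im (d u))
        with (Im (f (t + h)%R u - f t u - RtoC h * d u)%C) by (unfold RtoC, Re, Im; simpl; ring).
      apply Rabs_Im_le_Cmod.
Qed.

(** * The path [t |-> erfcx (t z)] *)

Definition cgau (z : C) (s : R) : C := cexp (- (RtoC s * z * (RtoC s * z)))%C.

Lemma cgau_eq (z : C) (s : R) : cgau z s = cexp (RtoC s * (Ci * z) * (RtoC s * (Ci * z)))%C.
Proof.
  unfold cgau. f_equal. destruct z as [a b].
  unfold Ci, RtoC, Cmult, Copp; apply injective_projections; simpl; ring.
Qed.

Lemma is_derive_C_cgau (z : C) (t : R) :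
  is_derive_C (cgau z) t (- (RtoC (2 * t) * (z * z) * cgau z t))%C.
Proof.
  eapply is_derive_C_ext; [intros s; symmetry; apply cgau_eq|].
  eapply is_derive_C_eq; [apply is_derive_C_cexp_sq|]. rewrite <- cgau_eq.
  destruct z as [a b]. unfold Ci, RtoC, Cmult, Copp; apply injective_projections; simpl; ring.
Qed.

Lemma cgau_0 (z : C) : cgau z 0 = 1%C.
Proof.
  destruct z as [a b]. rewrite cgau_eq. destruct (Ci * (a, b))%C as [c d].
  rewrite cexp_sq, !Rmult_0_l, exp_0, cos_0, sin_0. unfold RtoC; f_equal; ring.
Qed.

Definition cgau_integral (z : C) (t : R) : C :=
  RInt (V := C_R_CompleteNormedModule) (cgau z) 0 t.

Lemma is_derive_C_cgau_integral (z : C) (t : R) : is_derive_C (cgau_integral z) t (cgau z t).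
Proof.
  assert (Hc : forall s,
    continuous (fun s => Re (cgau z s)) s /\ continuous (fun s => Im (cgau z s)) s)
    by (intros s; eapply continuous_of_is_derive_C, is_derive_C_cgau).
  assert (Hex : forall b, ex_RInt (V := C_R_CompleteNormedModule) (cgau z) 0 b).
  { intros b. apply (ex_RInt_fct_extend_pair (U := R_NormedModule) (V := R_NormedModule));
      apply (ex_RInt_continuous (V := R_CompleteNormedModule)); intros s _;
      [exact (proj1 (Hc s)) | exact (proj2 (Hc s))]. }
  split.
  - apply (is_derive_ext (fun b => RInt (fun s => Re (cgau z s)) 0 b)).
    { intros b. apply is_RInt_unique.
      apply (is_RInt_fct_extend_fst (U := R_NormedModule) (V := R_NormedModule)).
      apply (RInt_correct (V := C_R_CompleteNormedModule)), Hex. }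
    apply (is_derive_RInt (V := R_NormedModule) (fun s => Re (cgau z s))
             (fun b => RInt (fun s => Re (cgau z s)) 0 b) 0 t); [|exact (proj1 (Hc t))].
    apply filter_forall. intros b. apply (RInt_correct (V := R_CompleteNormedModule)).
    apply (ex_RInt_continuous (V := R_CompleteNormedModule)); intros s _; exact (proj1 (Hc s)).
  - apply (is_derive_ext (fun b => RInt (fun s => Im (cgau z s)) 0 b)).
    { intros b. apply is_RInt_unique.
      apply (is_RInt_fct_extend_snd (U := R_NormedModule) (V := R_NormedModule)).
      apply (RInt_correct (V := C_R_CompleteNormedModule)), Hex. }
    apply (is_derive_RInt (V := R_NormedModule) (fun s => Im (cgau z s))
             (fun b => RInt (fun s => Im (cgau z s)) 0 b) 0 t); [|exact (proj2 (Hc t))].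
    apply filter_forall. intros b. apply (RInt_correct (V := R_CompleteNormedModule)).
    apply (ex_RInt_continuous (V := R_CompleteNormedModule)); intros s _; exact (proj2 (Hc s)).
Qed.

(* [erfcx (t z)], with the integral from [0] to [t z] taken along [s |-> s z], [0 <= s <= t] *)
Definition erfcx_path (z : C) (t : R) : C :=
  (cexp (RtoC t * z * (RtoC t * z)) * (1 - RtoC (2 / sqrt PI) * (z * cgau_integral z t)))%C.

Lemma erfcx_path_1 (z : C) : erfcx_path z 1 = erfcx z.
Proof. unfold erfcx_path, erfcx, int0_exp_msq, cgau_integral, cgau. now rewrite Cmult_1_l. Qed.

Lemma erfcx_path_0 (z : C) : erfcx_path z 0 = 1%C.
Proof.
  unfold erfcx_path, cgau_integral. rewrite RInt_point.
  replace (cexp (RtoC 0 * z * (RtoC 0 * z))) with (cgau z 0)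
    by (unfold cgau; f_equal; unfold RtoC; destruct z; apply injective_projections; simpl; ring).
  rewrite cgau_0. change (@zero C_R_CompleteNormedModule) with (RtoC 0). ring.
Qed.

Lemma is_derive_C_erfcx_path (z : C) (t : R) :
  is_derive_C (erfcx_path z) t
    (RtoC (2 * t) * (z * z) * erfcx_path z t - RtoC (2 / sqrt PI) * z)%C.
Proof.
  unfold erfcx_path. eapply is_derive_C_eq.
  - apply is_derive_C_mult; [apply is_derive_C_cexp_sq|].
    apply is_derive_C_minus; [apply is_derive_C_const|].
    apply is_derive_C_mult; [apply is_derive_C_const|].
    apply is_derive_C_mult; [apply is_derive_C_const | apply is_derive_C_cgau_integral].
  - pose proof (cexp_opp_r (RtoC t * z * (RtoC t * z))) as E. fold (cgau z t) in E.
    transitivity (RtoC (2 * t) * (z * z) * (cexp (RtoC t * z * (RtoC t * z))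
        * (1 - RtoC (2 / sqrt PI) * (z * cgau_integral z t)))
      - RtoC (2 / sqrt PI) * z * (cexp (RtoC t * z * (RtoC t * z)) * cgau z t))%C;
      [ring | rewrite E; ring].
Qed.

Lemma cgau_real (p s : R) : cgau (p, 0) s = RtoC (gau (p * s)).
Proof.
  transitivity (cexp (RtoC s * (0, p) * (RtoC s * (0, p))))%C.
  - unfold cgau. f_equal. unfold RtoC, Cmult, Copp; apply injective_projections; simpl; ring.
  - rewrite cexp_sq. replace (s * s * (2 * 0 * p)) with 0 by ring. rewrite cos_0, sin_0.
    unfold gau, RtoC. apply injective_projections; simpl; [rewrite Rmult_1_r; f_equal | ]; ring.
Qed.

Lemma cgau_integral_real (p : R) : 0 < p -> cgau_integral (p, 0) 1 = RtoC (RInt gau 0 p / p).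
Proof.
  intros Hp.
  assert (Hsub : is_RInt (fun s => gau (p * s)) 0 1 (RInt gau 0 p / p)).
  { assert (K := is_RInt_comp_lin gau p 0 0 1 (RInt gau 0 p)).
    rewrite !Rmult_0_r, Rmult_1_r, !Rplus_0_r in K.
    specialize (K (RInt_correct (V := R_CompleteNormedModule) _ _ _ (ex_RInt_gau 0 p))).
    apply (is_RInt_scal _ _ _ (/ p)) in K.
    replace (RInt gau 0 p / p) with (scal (/ p) (RInt gau 0 p))
      by (unfold scal; simpl; unfold mult; simpl; unfold Rdiv; ring).
    eapply is_RInt_ext; [|exact K].
    intros s _. unfold scal; simpl; unfold mult; simpl. rewrite Rplus_0_r. field. lra. }
  unfold cgau_integral.
  rewrite (RInt_ext (V := C_R_CompleteNormedModule) _ (fun s => RtoC (gau (p * s))))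
    by (intros; apply cgau_real).
  apply (is_RInt_unique (V := C_R_CompleteNormedModule)).
  apply (is_RInt_fct_extend_pair (U := R_NormedModule) (V := R_NormedModule)); simpl.
  - exact Hsub.
  - replace 0 with (scal (1 - 0) 0) at 2 by (unfold scal; simpl; unfold mult; simpl; ring).
    apply (is_RInt_const (V := R_NormedModule)).
Qed.

Lemma cexp_RtoC (x : R) : cexp (RtoC x) = RtoC (exp x).
Proof. unfold cexp, RtoC; simpl. rewrite cos_0, sin_0. f_equal; ring. Qed.

(** * Estimates as [t -> 0+] *)

Lemma filterlim_at_right_0_of_linear_bound (f : R -> R) (l K del : R) : 0 < del ->
  (forall t, 0 < t < del -> Rabs (f t - l) <= K * t) -> filterlim f (at_right 0) (locally l).
Proof.
  intros Hdel Hf. apply filterlim_locally. intros eps.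
  set (d := Rmin del (eps / (Rabs K + 1))).
  assert (Hd : 0 < d).
  { apply Rmin_glb_lt; auto. apply Rdiv_lt_0_compat; [apply cond_pos | pose proof (Rabs_pos K); lra]. }
  exists (mkposreal d Hd). intros t Ht Ht0. simpl in Ht.
  change (Rabs (f t - l) < eps).
  unfold ball in Ht; simpl in Ht; unfold AbsRing_ball, abs, minus, plus, opp in Ht; simpl in Ht.
  rewrite Ropp_0, Rplus_0_r, Rabs_pos_eq in Ht by lra.
  assert (d <= del) by apply Rmin_l. assert (d <= eps / (Rabs K + 1)) by apply Rmin_r.
  pose proof (Rle_abs K); pose proof (Rabs_pos K); pose proof (cond_pos eps).
  eapply Rle_lt_trans; [apply Hf; lra|].
  apply Rle_lt_trans with ((Rabs K + 1) * t); [nra|].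
  replace (pos eps) with ((Rabs K + 1) * (eps / (Rabs K + 1))) by (field; lra).
  apply Rmult_lt_compat_l; lra.
Qed.

Lemma Cauchy_kernel_weight_le (m e v c : R) : 0 < e -> 0 <= m <= 1 -> m <= (v + c) ^ 2 ->
  m * e / (e ^ 2 + v ^ 2) <= 3 * e * (1 / (1 ^ 2 + v ^ 2)) + 2 * c ^ 2 * (e / (e ^ 2 + v ^ 2)).
Proof.
  intros He Hm Hmv. pose proof (pow2_ge_0 v); pose proof (pow2_ge_0 c).
  assert (K : (m - 2 * c ^ 2) * (1 + v ^ 2) <= 3 * (e ^ 2 + v ^ 2)).
  { destruct (Rle_dec m (2 * c ^ 2)).
    - assert (0 <= (2 * c ^ 2 - m) * (1 + v ^ 2)) by (apply Rmult_le_pos; nra). nra.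
    - (* [(v + c)^2 <= 2 v^2 + 2 c^2] *)
      pose proof (pow2_ge_0 (v - c)).
      assert (0 <= (1 - (m - 2 * c ^ 2)) * v ^ 2) by (apply Rmult_le_pos; nra). nra. }
  apply Rmult_le_reg_r with ((e ^ 2 + v ^ 2) * (1 + v ^ 2) / e); [apply Rdiv_lt_0_compat; nra|].
  replace (m * e / (e ^ 2 + v ^ 2) * ((e ^ 2 + v ^ 2) * (1 + v ^ 2) / e))
    with (m * (1 + v ^ 2)) by (field; nra).
  replace ((3 * e * (1 / (1 ^ 2 + v ^ 2)) + 2 * c ^ 2 * (e / (e ^ 2 + v ^ 2)))
             * ((e ^ 2 + v ^ 2) * (1 + v ^ 2) / e))
    with (3 * (e ^ 2 + v ^ 2) + 2 * c ^ 2 * (1 + v ^ 2)) by (field; nra).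
  nra.
Qed.

Lemma Rabs_exp_opp_minus_exp_le (x : R) : Rabs (exp (- x) - exp x) <= 2 * Rabs x * exp (Rabs x).
Proof.
  assert (K : forall y, 0 <= y -> Rabs (exp (- y) - exp y) <= 2 * y * exp y).
  { intros y Hy.
    assert (E : exp (- y) = exp y * exp (- (2 * y))) by (rewrite <- exp_plus; f_equal; ring).
    pose proof (exp_ineq1_le (- (2 * y))); pose proof (exp_pos y); pose proof (exp_pos (- (2 * y))).
    assert (exp (- (2 * y)) <= 1) by (rewrite <- exp_0; apply exp_le_compat; lra).
    rewrite Rabs_left1 by (rewrite E; nra). rewrite E. nra. }
  destruct (Rle_dec 0 x).
  - rewrite (Rabs_pos_eq x) by auto. now apply K.
  - rewrite (Rabs_left x), <- Rabs_Ropp by lra.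
    replace (- (exp (- x) - exp x)) with (exp (- - x) - exp (- x)) by (rewrite Ropp_involutive; ring).
    apply K; lra.
Qed.

Lemma gau_odd_part_le (v c e : R) : 0 < e -> Rabs c <= 1 / 2 ->
  Rabs ((exp (- (v + c) ^ 2) - exp (- (v - c) ^ 2)) * v / (e ^ 2 + v ^ 2))
  <= 4 * Rabs c * exp (1 / 2) * exp (- v ^ 2 / 2).
Proof.
  intros He Hc. pose proof (pow2_ge_0 v). pose proof (Rabs_pos v); pose proof (Rabs_pos c).
  assert (HD : 0 < e ^ 2 + v ^ 2) by nra.
  replace (exp (- (v + c) ^ 2) - exp (- (v - c) ^ 2))
    with (exp (- v ^ 2 - c ^ 2) * (exp (- (2 * v * c)) - exp (2 * v * c)))
    by (rewrite Rmult_minus_distr_l, <- !exp_plus; f_equal; f_equal; ring).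
  pose proof (Rabs_exp_opp_minus_exp_le (2 * v * c)) as K.
  replace (Rabs (2 * v * c)) with (2 * (Rabs v * Rabs c)) in K
    by (rewrite !Rabs_mult, (Rabs_pos_eq 2) by lra; ring).
  assert (B1 : exp (- v ^ 2 - c ^ 2) <= exp (- v ^ 2))
    by (apply exp_le_compat; pose proof (pow2_ge_0 c); lra).
  (* [- v^2 + |v| <= 1/2 - v^2/2] *)
  assert (B2 : exp (- v ^ 2) * exp (2 * (Rabs v * Rabs c)) <= exp (1 / 2) * exp (- v ^ 2 / 2)).
  { rewrite <- !exp_plus. apply exp_le_compat.
    rewrite <- pow2_abs. pose proof (pow2_ge_0 (Rabs v - 1)). nra. }
  assert (B3 : Rabs v * Rabs v / (e ^ 2 + v ^ 2) <= 1).
  { rewrite <- Rabs_mult, Rabs_pos_eq by nra.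
    apply Rmult_le_reg_r with (e ^ 2 + v ^ 2); auto.
    unfold Rdiv; rewrite Rmult_assoc, Rinv_l by lra. nra. }
  assert (B4 : 0 <= Rabs v * Rabs v / (e ^ 2 + v ^ 2)) by (apply Rdiv_le_0_compat; nra).
  pose proof (exp_pos (- v ^ 2 - c ^ 2)); pose proof (exp_pos (2 * (Rabs v * Rabs c))).
  pose proof (exp_pos (1 / 2)); pose proof (exp_pos (- v ^ 2 / 2)); pose proof (exp_pos (- v ^ 2)).
  pose proof (Rabs_pos (exp (- (2 * v * c)) - exp (2 * v * c))).
  apply Rle_trans with (4 * Rabs c * (exp (- v ^ 2) * exp (2 * (Rabs v * Rabs c)))
                          * (Rabs v * Rabs v / (e ^ 2 + v ^ 2))).
  - unfold Rdiv.
    rewrite !Rabs_mult, Rabs_inv, (Rabs_pos_eq (exp _)), (Rabs_pos_eq (e ^ 2 + v ^ 2)) by lra.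
    replace (4 * Rabs c * (exp (- v ^ 2) * exp (2 * (Rabs v * Rabs c)))
               * (Rabs v * Rabs v * / (e ^ 2 + v ^ 2)))
      with (exp (- v ^ 2) * (2 * (2 * (Rabs v * Rabs c)) * exp (2 * (Rabs v * Rabs c)))
              * Rabs v * / (e ^ 2 + v ^ 2)) by ring.
    apply Rmult_le_compat_r; [left; now apply Rinv_0_lt_compat|].
    apply Rmult_le_compat_r; auto. apply Rmult_le_compat; lra.
  - replace (4 * Rabs c * exp (1 / 2) * exp (- v ^ 2 / 2))
      with (4 * Rabs c * (exp (1 / 2) * exp (- v ^ 2 / 2)) * 1) by ring.
    apply Rmult_le_compat; [| exact B4 | | exact B3].
    + apply Rmult_le_pos; [lra|]. apply Rmult_le_pos; lra.
    + apply Rmult_le_compat_l; lra.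
Qed.

Lemma filterlim_at_right_continuous (f : R -> R) (x : R) :
  continuous f x -> filterlim f (at_right x) (locally (f x)).
Proof. intros H. eapply filterlim_filter_le_1; [apply filter_le_within | exact H]. Qed.

(** * The Voigt integral *)

(* [gauss_integral] is only shown to be [sqrt PI] at the end, by specialising the argument
   below to real [z]; until then the constant must be carried along. *)
Definition erfcx_scale : R := gauss_integral * sqrt PI.

Section Voigt.

Variables p q : R.
Hypothesis Hp : 0 < p.

(* [denom t u] is [t z - i u] for [z = p + i q], so that
   [voigt t = int e^(-u^2) / (t z - i u) du]; its real part is, up to normalisation,
   the Voigt profile (the convolution of a Gaussian and a Cauchy density). *)
Definition denom (t u : R) : C := (t * p, t * q - u).

Lemma denom_norm2_pos (t u : R) : 0 < t -> 0 < (t * p) ^ 2 + (u - t * q) ^ 2.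
Proof.
  intros Ht. pose proof (Rmult_lt_0_compat t p Ht Hp). pose proof (pow2_ge_0 (u - t * q)). nra.
Qed.

Lemma Cmod_denom_ge (t u : R) : 0 < t -> t * p <= Cmod (denom t u).
Proof.
  intros Ht. eapply Rle_trans; [|apply re_le_Cmod]. simpl. rewrite Rabs_pos_eq; nra.
Qed.

Lemma denom_neq_0 (t u : R) : 0 < t -> denom t u <> 0%C.
Proof. intros Ht E. injection E as E1 E2. nra. Qed.

Definition kernel (t u : R) : C := (RtoC (gau u) / denom t u)%C.

Lemma Cmod_kernel_le (t u : R) : 0 < t -> Cmod (kernel t u) <= / (t * p) * gau u.
Proof.
  intros Ht. pose proof (Cmod_denom_ge t u Ht). pose proof (gau_pos u).
  unfold kernel. rewrite Cmod_div by now apply denom_neq_0.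
  rewrite Cmod_R, Rabs_pos_eq by lra. unfold Rdiv. rewrite Rmult_comm.
  apply Rmult_le_compat_r; [lra|]. apply Rinv_le_contravar; nra.
Qed.

Lemma kernel_eq (t u : R) : 0 < t ->
  kernel t u = (gau u * (t * p) / ((t * p) ^ 2 + (u - t * q) ^ 2),
                gau u * (u - t * q) / ((t * p) ^ 2 + (u - t * q) ^ 2)).
Proof.
  intros Ht. pose proof (denom_norm2_pos t u Ht).
  unfold kernel, denom, Cdiv, Cinv, Cmult, RtoC; simpl.
  apply injective_projections; simpl; field; nra.
Qed.

Lemma is_derive_C_kernel_u (t u : R) : 0 < t ->
  is_derive_C (kernel t) u
    (RtoC (- 2 * u * gau u) / denom t u + RtoC (gau u) * Ci / (denom t u * denom t u))%C.
Proof.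
  intros Ht. pose proof (denom_neq_0 t u Ht).
  pose proof (denom_norm2_pos t u Ht).
  eapply is_derive_C_ext; [intros s; symmetry; apply kernel_eq; auto|].
  split; simpl; unfold gau; auto_derive; try nra;
    unfold denom, Cdiv, Cinv, Cmult, Cplus, RtoC, Ci; simpl; field; nra.
Qed.

Definition voigt (t : R) : C := improper_CRInt (kernel t).

Lemma is_improper_CRInt_voigt (t : R) : 0 < t -> is_improper_CRInt (kernel t) (voigt t).
Proof.
  intros Ht.
  apply (is_improper_CRInt_dominated _ (fun u => / (t * p) * gau u) (/ (t * p) * gauss_integral)).
  - intros u. eapply continuous_of_is_derive_C, is_derive_C_kernel_u, Ht.
  - intros u. now apply Cmod_kernel_le.
  - apply is_improper_RInt_scal, is_improper_RInt_gau.
Qed.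

Definition dkernel (t u : R) : C := (- ((p, q) * RtoC (gau u)) / (denom t u * denom t u))%C.

(* [dkernel] is the [t]-derivative of [kernel]; modulo an exact [u]-derivative it is a
   combination of [kernel] and of the Gaussian, which yields the differential equation. *)
Lemma dkernel_decomposition (t u : R) : 0 < t ->
  dkernel t u = (RtoC (2 * t) * ((p, q) * (p, q)) * kernel t u - RtoC 2 * (p, q) * RtoC (gau u)
    + Ci * (p, q) * (RtoC (- 2 * u * gau u) / denom t u
                     + RtoC (gau u) * Ci / (denom t u * denom t u)))%C.
Proof.
  intros Ht. pose proof (denom_norm2_pos t u Ht).
  unfold dkernel, kernel, denom, Cdiv, Cinv, Cmult, Cplus, Cminus, Copp, RtoC, Ci; simpl.
  apply injective_projections; simpl; field; nra.
Qed.

Lemma is_improper_CRInt_dkernel (t : R) : 0 < t ->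
  is_improper_CRInt (dkernel t)
    (RtoC (2 * t) * ((p, q) * (p, q)) * voigt t - RtoC 2 * (p, q) * RtoC gauss_integral)%C.
Proof.
  intros Ht.
  eapply is_improper_CRInt_ext; [intros u; symmetry; now apply dkernel_decomposition|].
  rewrite <- (Cplus_0_r (_ - _)%C).
  apply is_improper_CRInt_plus; [apply is_improper_CRInt_minus|].
  - now apply is_improper_CRInt_scal, is_improper_CRInt_voigt.
  - apply is_improper_CRInt_scal, is_improper_CRInt_RtoC, is_improper_RInt_gau.
  - apply (is_improper_CRInt_derive_vanishing (fun u => Ci * (p, q) * kernel t u)%C).
    + intros u. eapply is_derive_C_eq.
      * apply is_derive_C_mult; [apply is_derive_C_const | now apply is_derive_C_kernel_u].
      * cbv beta; ring.
    + intros u. pose proof (denom_norm2_pos t u Ht).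
      unfold denom, gau, Cdiv, Cinv, Cmult, Cplus, RtoC, Ci; simpl.
      split; apply (ex_derive_continuous (V := R_NormedModule)); auto_derive; repeat split; nra.
    + intros eps He. destruct (gau_vanishing (Cmod (p, q) / (t * p)) eps He) as [M HM].
      exists M. intros u Hu. eapply Rle_lt_trans; [|apply (HM u Hu)].
      rewrite !Cmod_mult, Cmod_Ci, Rmult_1_l.
      pose proof (Cmod_kernel_le t u Ht). pose proof (Cmod_ge_0 (p, q)).
      unfold Rdiv. rewrite Rmult_assoc. now apply Rmult_le_compat_l.
Qed.

Lemma kernel_taylor_remainder (t h u : R) : 0 < t -> 0 < t + h ->
  (kernel (t + h) u - kernel t u - RtoC h * dkernel t u)%C
  = (RtoC (gau u) * (RtoC h * RtoC h) * ((p, q) * (p, q))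
       / (denom t u * denom t u * denom (t + h) u))%C.
Proof.
  intros Ht Hth.
  assert (E : denom (t + h) u = (denom t u + RtoC h * (p, q))%C).
  { unfold denom, RtoC, Cplus, Cmult; simpl. f_equal; ring. }
  pose proof (denom_neq_0 t u Ht); pose proof (denom_neq_0 (t + h) u Hth).
  unfold kernel, dkernel. rewrite E in *. field. auto.
Qed.

Lemma Cmod_kernel_taylor_remainder_le (t h u : R) : 0 < t -> Rabs h < t / 2 ->
  Cmod (kernel (t + h) u - kernel t u - RtoC h * dkernel t u)%C
  <= h ^ 2 * (2 * Cmod (p, q) ^ 2 / (t * p) ^ 3 * gau u).
Proof.
  intros Ht Hh. apply Rabs_def2 in Hh.
  assert (Hth : 0 < t + h) by lra.
  assert (Htp : 0 < t * p) by nra.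
  (* on [|h| < t/2] the three denominators have modulus at least [tp, tp, tp/2] *)
  pose proof (Cmod_denom_ge t u Ht) as A. pose proof (Cmod_denom_ge (t + h) u Hth) as B.
  assert (Hab : (t * p) ^ 3 / 2 <= Cmod (denom t u) * Cmod (denom t u) * Cmod (denom (t + h) u)).
  { replace ((t * p) ^ 3 / 2) with (t * p * (t * p) * (t * p / 2)) by field.
    apply Rmult_le_compat; try nra. }
  assert (0 < (t * p) ^ 3) by (apply pow_lt; auto).
  rewrite kernel_taylor_remainder by auto.
  rewrite Cmod_div by (apply Cmod_gt_0; rewrite !Cmod_mult; lra).
  rewrite !Cmod_mult, !Cmod_R, (Rabs_pos_eq (gau u)) by (left; apply gau_pos).
  rewrite <- Rabs_mult, Rabs_pos_eq by nra.
  pose proof (gau_pos u); pose proof (Cmod_ge_0 (p, q)); pose proof (pow2_ge_0 h).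
  apply Rmult_le_reg_r with (Cmod (denom t u) * Cmod (denom t u) * Cmod (denom (t + h) u)); [lra|].
  unfold Rdiv. rewrite Rmult_assoc, Rinv_l, Rmult_1_r by lra.
  apply Rle_trans with (h ^ 2 * (2 * Cmod (p, q) ^ 2 * / (t * p) ^ 3 * gau u) * ((t * p) ^ 3 / 2)).
  - right. field. lra.
  - apply Rmult_le_compat_l; [|exact Hab].
    apply Rmult_le_pos; [nra|]. apply Rmult_le_pos; [|lra].
    apply Rmult_le_pos; [nra|]. left; now apply Rinv_0_lt_compat.
Qed.

Lemma is_derive_C_voigt (t : R) : 0 < t ->
  is_derive_C voigt t
    (RtoC (2 * t) * ((p, q) * (p, q)) * voigt t - RtoC 2 * (p, q) * RtoC gauss_integral)%C.
Proof.
  intros Ht.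
  apply (is_derive_C_improper_CRInt kernel voigt (dkernel t)
           (fun u => 2 * Cmod (p, q) ^ 2 / (t * p) ^ 3 * gau u) _
           (2 * Cmod (p, q) ^ 2 / (t * p) ^ 3 * gauss_integral) t (t / 2)).
  - lra.
  - intros s Hs. apply Rabs_def2 in Hs. apply is_improper_CRInt_voigt; lra.
  - now apply is_improper_CRInt_dkernel.
  - apply is_improper_RInt_scal, is_improper_RInt_gau.
  - intros h u Hh. now apply Cmod_kernel_taylor_remainder_le.
Qed.


Lemma Re_kernel_pos (t u : R) : 0 < t -> 0 < Re (kernel t u).
Proof.
  intros Ht. rewrite kernel_eq by auto. unfold Re; cbn [fst].
  pose proof (gau_pos u); pose proof (denom_norm2_pos t u Ht).
  apply Rdiv_lt_0_compat; [apply Rmult_lt_0_compat; nra | auto].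
Qed.

Lemma Re_voigt_pos (t : R) : 0 < t -> 0 < Re (voigt t).
Proof.
  intros Ht. pose proof (is_improper_CRInt_voigt t Ht) as [K _].
  apply Rlt_le_trans with (RInt (fun u => Re (kernel t u)) (-1) 1).
  - apply RInt_gt_0; [lra | intros u _; now apply Re_kernel_pos |].
    intros u _. exact (proj1 (continuous_of_is_derive_C _ _ _ (is_derive_C_kernel_u t u Ht))).
  - apply is_improper_RInt_ge_RInt; auto; [|lra].
    intros u; left; now apply Re_kernel_pos.
Qed.

Lemma Re_voigt_le (t : R) : 0 < t -> Re (voigt t) <= / (t * p) * gauss_integral.
Proof.
  intros Ht. pose proof (is_improper_CRInt_voigt t Ht) as [K _].
  eapply Rle_trans; [apply Rle_abs|].
  apply (is_improper_RInt_abs_le (fun u => Re (kernel t u)) (fun u => / (t * p) * gau u)); auto.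
  - intros u. eapply Rle_trans; [apply re_le_Cmod | now apply Cmod_kernel_le].
  - apply is_improper_RInt_scal, is_improper_RInt_gau.
Qed.


Lemma Re_voigt_bounds (t : R) : 0 < t ->
  0 <= PI - Re (voigt t) <= 3 * (t * p) * PI + 2 * (t * q) ^ 2 * PI.
Proof.
  intros Ht. set (e := t * p). set (c := t * q).
  assert (He : 0 < e) by (unfold e; nra).
  set (P := fun u => e / (e ^ 2 + (u - c) ^ 2)).
  assert (HP : is_improper_RInt P PI) by now apply is_improper_RInt_Cauchy.
  assert (H1 : is_improper_RInt (fun u => P u - Re (kernel t u)) (PI - Re (voigt t)))
    by (apply is_improper_RInt_minus; auto; apply (is_improper_CRInt_voigt t Ht)).
  assert (Hpt : forall u, 0 <= P u - Re (kernel t u)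
                   <= 3 * e * (1 / (1 ^ 2 + (u - c) ^ 2)) + 2 * c ^ 2 * P u).
  { intros u. rewrite kernel_eq by auto. unfold P, Re; cbn [fst]. fold e c.
    pose proof (pow2_ge_0 (u - c)).
    pose proof (gau_pos u); pose proof (gau_le_1 u); pose proof (one_minus_sq_le_gau u).
    replace (e / (e ^ 2 + (u - c) ^ 2) - gau u * e / (e ^ 2 + (u - c) ^ 2))
      with ((1 - gau u) * e / (e ^ 2 + (u - c) ^ 2)) by (field; nra).
    split; [apply Rdiv_le_0_compat; nra|].
    apply Cauchy_kernel_weight_le; [auto | lra | replace (u - c + c) with u by ring; lra]. }
  split.
  - apply (is_improper_RInt_le (fun _ => 0) (fun u => P u - Re (kernel t u)));
      auto using is_improper_RInt_const0. intros u; apply Hpt.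
  - apply (is_improper_RInt_le (fun u => P u - Re (kernel t u))
             (fun u => 3 * e * (1 / (1 ^ 2 + (u - c) ^ 2)) + 2 * c ^ 2 * P u)); auto.
    + apply is_improper_RInt_plus; apply is_improper_RInt_scal; auto.
      apply is_improper_RInt_Cauchy; lra.
    + intros u; apply Hpt.
Qed.

Lemma Rabs_Im_voigt_le (t : R) : 0 < t -> Rabs (t * q) <= 1 / 2 ->
  Rabs (Im (voigt t)) <= 2 * Rabs (t * q) * exp (1 / 2) * (sqrt 2 * gauss_integral).
Proof.
  intros Ht Hc. set (c := t * q) in *. set (e := t * p).
  assert (He : 0 < e) by (unfold e; nra).
  pose proof (proj2 (is_improper_CRInt_voigt t Ht)) as K1.
  (* pairing [u] with its mirror image [2c - u] leaves only the odd part of the Gaussian *)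
  pose proof (is_improper_RInt_plus _ _ _ _ K1 (is_improper_RInt_comp_refl _ _ (2 * c) K1)) as K2.
  assert (Hpt : forall u, Im (kernel t u) + Im (kernel t (2 * c - u)) =
     (exp (- ((u - c) + c) ^ 2) - exp (- ((u - c) - c) ^ 2)) * (u - c) / (e ^ 2 + (u - c) ^ 2)).
  { intros u. rewrite !kernel_eq by auto. unfold Im, gau; cbn [snd]. fold e c.
    pose proof (pow2_ge_0 (u - c)).
    replace ((u - c) + c) with u by ring.
    replace (- ((u - c) - c) ^ 2) with (- (2 * c - u) ^ 2) by ring.
    replace ((2 * c - u - c) ^ 2) with ((u - c) ^ 2) by ring.
    field. nra. }
  pose proof (is_improper_RInt_scal _ (4 * Rabs c * exp (1 / 2)) _ (is_improper_RInt_gau_shifted c))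
    as K3.
  pose proof (is_improper_RInt_abs_le _ _ _ _
    (fun u => ltac:(rewrite Hpt; apply gau_odd_part_le; auto)) K2 K3) as B.
  replace (Im (voigt t) + Im (voigt t)) with (2 * Im (voigt t)) in B by ring.
  rewrite Rabs_mult, Rabs_pos_eq in B by lra. lra.
Qed.

Lemma filterlim_Re_voigt_0 : filterlim (fun t => Re (voigt t)) (at_right 0) (locally PI).
Proof.
  apply (filterlim_at_right_0_of_linear_bound _ _ ((3 * p + 2 * q ^ 2) * PI) 1); [lra|].
  intros t [Ht0 Ht1]. destruct (Re_voigt_bounds t) as [B1 B2]; [lra|].
  rewrite Rabs_minus_sym, Rabs_pos_eq by lra. pose proof PI_RGT_0; pose proof (pow2_ge_0 q).
  assert (t * t * (q ^ 2 * PI) <= t * (q ^ 2 * PI))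
    by (apply Rmult_le_compat_r; [apply Rmult_le_pos|]; nra).
  replace ((t * q) ^ 2) with (t * t * q ^ 2) in B2 by ring. nra.
Qed.

Lemma filterlim_Im_voigt_0 : filterlim (fun t => Im (voigt t)) (at_right 0) (locally 0).
Proof.
  pose proof (Rabs_pos q).
  apply (filterlim_at_right_0_of_linear_bound _ _
           (2 * Rabs q * exp (1 / 2) * (sqrt 2 * gauss_integral)) (1 / (2 * Rabs q + 1)));
    [apply Rdiv_lt_0_compat; lra|].
  intros t Ht. rewrite Rminus_0_r.
  assert (Htq : Rabs (t * q) <= 1 / 2).
  { rewrite Rabs_mult, Rabs_pos_eq by lra.
    assert (t * (2 * Rabs q + 1) < 1); [|nra].
    replace 1 with (1 / (2 * Rabs q + 1) * (2 * Rabs q + 1)) at 2 by (field; lra).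
    apply Rmult_lt_compat_r; lra. }
  eapply Rle_trans; [apply (Rabs_Im_voigt_le t); auto; lra|].
  rewrite Rabs_mult, (Rabs_pos_eq t) by lra. right; ring.
Qed.


(* constant in [t]: [voigt] and [erfcx_scale * erfcx_path] both solve [y' = 2 t z^2 y - 2 G z] *)
Definition voigt_invariant (t : R) : C :=
  ((voigt t - RtoC erfcx_scale * erfcx_path (p, q) t) * cgau (p, q) t)%C.

Lemma is_derive_C_voigt_invariant (t : R) : 0 < t -> is_derive_C voigt_invariant t 0%C.
Proof.
  intros Ht. unfold voigt_invariant. eapply is_derive_C_eq.
  - apply is_derive_C_mult; [apply is_derive_C_minus|apply is_derive_C_cgau].
    + now apply is_derive_C_voigt.
    + apply is_derive_C_mult; [apply is_derive_C_const | apply is_derive_C_erfcx_path].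
  - assert (E : (RtoC erfcx_scale * RtoC (2 / sqrt PI) = RtoC 2 * RtoC gauss_integral)%C).
    { unfold erfcx_scale, RtoC, Cmult. pose proof (sqrt_lt_R0 PI PI_RGT_0).
      apply injective_projections; simpl; field; lra. }
    transitivity ((RtoC erfcx_scale * RtoC (2 / sqrt PI) - RtoC 2 * RtoC gauss_integral)
                    * (p, q) * cgau (p, q) t)%C; [ring | rewrite E; ring].
Qed.

Lemma voigt_eq_on_unit_interval (t : R) : 0 < t <= 1 ->
  voigt t = (voigt_invariant 1 * cexp (RtoC t * (p, q) * (RtoC t * (p, q)))
                 + RtoC erfcx_scale * erfcx_path (p, q) t)%C.
Proof.
  intros Ht.
  rewrite <- (is_derive_C_zero_constant voigt_invariant t 1) by
    (lra || (intros s Hs; apply is_derive_C_voigt_invariant; lra)).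
  unfold voigt_invariant, cgau.
  pose proof (cexp_opp_r (RtoC t * (p, q) * (RtoC t * (p, q)))) as E.
  transitivity ((voigt t - RtoC erfcx_scale * erfcx_path (p, q) t)
                  * (cexp (RtoC t * (p, q) * (RtoC t * (p, q)))
                     * cexp (- (RtoC t * (p, q) * (RtoC t * (p, q)))))
                + RtoC erfcx_scale * erfcx_path (p, q) t)%C; [rewrite E; ring | ring].
Qed.

Lemma voigt_invariant_1 : voigt_invariant 1 = RtoC (PI - erfcx_scale).
Proof.
  set (N := fun t => (voigt_invariant 1 * cexp (RtoC t * (p, q) * (RtoC t * (p, q)))
                      + RtoC erfcx_scale * erfcx_path (p, q) t)%C).
  assert (HN : forall t, is_derive_C N t
    (voigt_invariant 1 * (RtoC (2 * t) * ((p, q) * (p, q)) * cexp (RtoC t * (p, q) * (RtoC t * (p, q))))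
     + RtoC erfcx_scale * (RtoC (2 * t) * ((p, q) * (p, q)) * erfcx_path (p, q) t
                           - RtoC (2 / sqrt PI) * (p, q)))%C).
  { intros t. eapply is_derive_C_eq.
    - apply is_derive_C_plus; (apply is_derive_C_mult; [apply is_derive_C_const|]);
        [apply is_derive_C_cexp_sq | apply is_derive_C_erfcx_path].
    - cbv beta; ring. }
  assert (N0 : N 0 = (voigt_invariant 1 + RtoC erfcx_scale)%C).
  { unfold N. rewrite erfcx_path_0, cexp_sq, !Rmult_0_l, exp_0, cos_0, sin_0.
    apply injective_projections; simpl; ring. }
  assert (Hnear : at_right 0 (fun t => voigt t = N t)).
  { exists (mkposreal 1 Rlt_0_1). intros t Ht Ht0.
    apply voigt_eq_on_unit_interval.
    unfold ball in Ht; simpl in Ht; unfold AbsRing_ball, abs, minus, plus, opp in Ht; simpl in Ht.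
    rewrite Ropp_0, Rplus_0_r, Rabs_pos_eq in Ht by lra. lra. }
  destruct (continuous_of_is_derive_C N 0 _ (HN 0)) as [C1 C2].
  assert (R1 : Re (N 0) = PI).
  { apply (filterlim_locally_unique (fun t => Re (N t)) (F := at_right 0));
      [now apply filterlim_at_right_continuous|].
    eapply filterlim_ext_loc; [|exact (filterlim_Re_voigt_0)].
    eapply filter_imp; [|exact Hnear]. intros t E; cbv beta; now rewrite E. }
  assert (R2 : Im (N 0) = 0).
  { apply (filterlim_locally_unique (fun t => Im (N t)) (F := at_right 0));
      [now apply filterlim_at_right_continuous|].
    eapply filterlim_ext_loc; [|exact (filterlim_Im_voigt_0)].
    eapply filter_imp; [|exact Hnear]. intros t E; cbv beta; now rewrite E. }
  rewrite N0 in R1, R2. apply injective_projections; simpl in *; lra.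
Qed.

Lemma voigt_1 : voigt 1 =
  (RtoC (PI - erfcx_scale) * cexp ((p, q) * (p, q)) + RtoC erfcx_scale * erfcx (p, q))%C.
Proof.
  rewrite voigt_eq_on_unit_interval, voigt_invariant_1, erfcx_path_1 by lra.
  now rewrite Cmult_1_l.
Qed.

End Voigt.

(** * The Gaussian integral *)

Lemma Re_voigt_real_axis (p : R) : 0 < p ->
  Re (voigt p 0 1) = exp (p ^ 2) * (PI - 2 * gauss_integral * RInt gau 0 p).
Proof.
  intros Hp.
  rewrite voigt_1, <- erfcx_path_1 by auto. unfold erfcx_path.
  rewrite cgau_integral_real by auto.
  replace ((p, 0) * (p, 0))%C with (RtoC (p ^ 2))
    by (unfold RtoC, Cmult; apply injective_projections; simpl; ring).
  replace (RtoC 1 * (p, 0) * (RtoC 1 * (p, 0)))%C with (RtoC (p ^ 2))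
    by (unfold RtoC, Cmult; apply injective_projections; simpl; ring).
  rewrite cexp_RtoC. unfold erfcx_scale. pose proof (sqrt_lt_R0 PI PI_RGT_0).
  simpl. field. lra.
Qed.

Lemma RInt_gau_symmetric (r : R) : RInt gau (- r) r = 2 * RInt gau 0 r.
Proof.
  assert (H0 : is_RInt gau (-1 * 0 + 0) (-1 * r + 0) (RInt gau 0 (- r))).
  { replace (-1 * 0 + 0) with 0 by ring. replace (-1 * r + 0) with (- r) by ring.
    apply (RInt_correct (V := R_CompleteNormedModule)), ex_RInt_gau. }
  pose proof (is_RInt_opp _ _ _ _ (is_RInt_comp_lin gau (-1) 0 0 r _ H0)) as K.
  assert (E : RInt gau 0 r = - RInt gau 0 (- r)).
  { apply is_RInt_unique. eapply is_RInt_ext; [|exact K].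
    intros y _. change (- (-1 * gau (-1 * y + 0)) = gau y). unfold gau.
    replace (- (-1 * y + 0) ^ 2) with (- y ^ 2) by ring. ring. }
  rewrite <- (RInt_Chasles gau (- r) 0 r) by apply ex_RInt_gau.
  rewrite <- (opp_RInt_swap gau 0 (- r)) by apply ex_RInt_gau.
  unfold plus, opp; simpl. lra.
Qed.

Lemma gauss_integral_symmetric_bounds (r : R) : 0 < r ->
  PI - gauss_integral / r <= gauss_integral * RInt gau (- r) r <= PI.
Proof.
  intros Hr. rewrite RInt_gau_symmetric.
  pose proof (Re_voigt_pos r 0 Hr 1 Rlt_0_1) as Hpos.
  pose proof (Re_voigt_le r 0 Hr 1 Rlt_0_1) as Hle.
  rewrite Re_voigt_real_axis in Hpos, Hle by auto.
  assert (1 <= exp (r ^ 2)) by (rewrite <- exp_0; apply exp_le_compat, pow2_ge_0).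
  rewrite Rmult_1_l in Hle. pose proof (exp_pos (r ^ 2)). pose proof gauss_integral_nonneg.
  set (X := PI - 2 * gauss_integral * RInt gau 0 r) in *.
  assert (0 < X) by (apply (Rmult_lt_reg_l (exp (r ^ 2))); lra).
  assert (X <= gauss_integral / r) by (unfold Rdiv; rewrite Rmult_comm; nra).
  unfold X in *. lra.
Qed.

Lemma gauss_integral_sq : gauss_integral * gauss_integral = PI.
Proof.
  pose proof gauss_integral_nonneg as HG.
  apply (filterlim_locally_unique (F := Rbar_locally p_infty)
           (fun r => gauss_integral * RInt gau (- r) r)).
  - exact (filterlim_comp _ _ _ _ _ _ _ _
             (filterlim_RInt_symmetric _ _ is_improper_RInt_gau)
             (filterlim_scal_r (K := R_AbsRing) (V := R_NormedModule) gauss_integral gauss_integral)).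
  - apply filterlim_locally. intros eps. pose proof (cond_pos eps).
    exists (gauss_integral / eps). intros r Hr.
    assert (Hr0 : 0 < r)
      by (apply Rle_lt_trans with (gauss_integral / eps); [apply Rdiv_le_0_compat|]; lra).
    change (Rabs (gauss_integral * RInt gau (- r) r - PI) < eps).
    destruct (gauss_integral_symmetric_bounds r Hr0). rewrite Rabs_left1 by lra.
    cut (gauss_integral / r < eps); [lra|].
    apply Rmult_lt_reg_r with r; [lra|].
    replace (gauss_integral / r * r) with (gauss_integral / eps * eps) by (field; lra).
    rewrite (Rmult_comm eps r). now apply Rmult_lt_compat_r.
Qed.

Lemma gauss_integral_eq : gauss_integral = sqrt PI.
Proof. rewrite <- gauss_integral_sq, sqrt_square; auto using gauss_integral_nonneg. Qed.

Lemma voigt_1_erfcx (p q : R) : 0 < p -> voigt p q 1 = (RtoC PI * erfcx (p, q))%C.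
Proof.
  intros Hp. rewrite voigt_1 by auto.
  replace erfcx_scale with PI
    by (unfold erfcx_scale; rewrite gauss_integral_eq; symmetry; apply sqrt_sqrt, Rlt_le, PI_RGT_0).
  rewrite Rminus_diag. unfold RtoC at 1. rewrite Cmult_0_l, Cplus_0_l. reflexivity.
Qed.

(** * The posterior mean *)

Lemma posterior_mean_eq (fTheta leps : R -> R) (x D N : R) :
  is_improper_RInt (fun th => fTheta th * leps (x - th)) D ->
  is_improper_RInt (fun th => th * fTheta th * leps (x - th)) N ->
  posterior_mean fTheta leps x = N / D.
Proof.
  intros HD HN. unfold posterior_mean.
  fold (improper_RInt (fun th => th * fTheta th * leps (x - th))).
  fold (improper_RInt (fun th => fTheta th * leps (x - th))).
  now rewrite (is_improper_RInt_unique _ _ HN), (is_improper_RInt_unique _ _ HD).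
Qed.

Section NormalCauchy.

Variables (sigma0 sigmaeps theta0 x p q : R).
Hypotheses (Hs0 : 0 < sigma0) (Hp : 0 < p).
Hypotheses (Hse : sigmaeps = sqrt 2 * sigma0 * p) (Hx : x - theta0 = sqrt 2 * sigma0 * q).

(* the substitution [th = theta0 + beta * u] turns the Gaussian prior into [gau u] *)
Let beta := sqrt 2 * sigma0.
Let to_u (th : R) : R := - theta0 / beta + / beta * th.
Let k := / (sigma0 * sqrt (2 * PI) * PI).

Lemma beta_pos : 0 < beta.
Proof. unfold beta. pose proof (sqrt_lt_R0 2 ltac:(lra)). nra. Qed.

Lemma normal_cauchy_eq (th : R) :
  normal_pdf theta0 sigma0 th * cauchy_pdf 0 sigmaeps (x - th)
  = k * (Rabs (/ beta) * Re (kernel p q 1 (to_u th))).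
Proof.
  pose proof beta_pos as Hb.
  assert (Hb2 : beta ^ 2 = 2 * sigma0 ^ 2)
    by (unfold beta; rewrite Rpow_mult_distr, pow2_sqrt by lra; ring).
  assert (Hu : th - theta0 = beta * to_u th) by (unfold to_u; field; lra).
  assert (Hxu : x - th - 0 = beta * (q - to_u th)).
  { replace (x - th - 0) with ((x - theta0) - (th - theta0)) by ring.
    rewrite Hx, Hu. unfold beta; ring. }
  rewrite kernel_eq, Rabs_pos_eq by (auto; lra || (left; now apply Rinv_0_lt_compat)).
  unfold normal_pdf, cauchy_pdf, k, Re; cbn [fst].
  replace (- (th - theta0) ^ 2 / (2 * sigma0 ^ 2)) with (- to_u th ^ 2)
    by (rewrite Hu, <- Hb2; field; lra).
  rewrite Hxu, Hse. fold beta. unfold gau.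
  pose proof (pow2_ge_0 (to_u th - 1 * q)); pose proof (pow2_ge_0 (q - to_u th)).
  pose proof (exp_pos (- to_u th ^ 2)).
  pose proof (sqrt_lt_R0 (2 * PI) ltac:(pose proof PI_RGT_0; lra)).
  pose proof PI_RGT_0.
  field. repeat split; nra.
Qed.

Lemma normal_cauchy_moment_eq (th : R) :
  th * normal_pdf theta0 sigma0 th * cauchy_pdf 0 sigmaeps (x - th)
  = x * (normal_pdf theta0 sigma0 th * cauchy_pdf 0 sigmaeps (x - th))
    + k * (beta * p) * (Rabs (/ beta) * Im (kernel p q 1 (to_u th))).
Proof.
  pose proof beta_pos as Hb.
  assert (Hth : th = x + beta * (to_u th - q)).
  { replace th with (theta0 + (th - theta0)) at 1 by ring.
    replace theta0 with (x - beta * q) at 1 by (unfold beta; lra). unfold to_u. field. lra. }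
  rewrite Rmult_assoc, normal_cauchy_eq. rewrite Hth at 1.
  rewrite !kernel_eq by lra. unfold Re, Im; cbn [fst snd].
  pose proof (denom_norm2_pos p q Hp 1 (to_u th) Rlt_0_1).
  field. lra.
Qed.

Lemma is_improper_RInt_normal_cauchy :
  is_improper_RInt (fun th => normal_pdf theta0 sigma0 th * cauchy_pdf 0 sigmaeps (x - th))
    (k * Re (voigt p q 1)).
Proof.
  pose proof beta_pos as Hb.
  eapply is_improper_RInt_ext; [intros th; symmetry; apply normal_cauchy_eq|].
  apply is_improper_RInt_scal.
  apply (is_improper_RInt_comp_lin (fun u => Re (kernel p q 1 u))).
  - apply Rinv_neq_0_compat; lra.
  - exact (proj1 (is_improper_CRInt_voigt p q Hp 1 Rlt_0_1)).
Qed.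

Lemma is_improper_RInt_normal_cauchy_moment :
  is_improper_RInt (fun th => th * normal_pdf theta0 sigma0 th * cauchy_pdf 0 sigmaeps (x - th))
    (x * (k * Re (voigt p q 1)) + k * (beta * p) * Im (voigt p q 1)).
Proof.
  pose proof beta_pos as Hb.
  eapply is_improper_RInt_ext; [intros th; symmetry; apply normal_cauchy_moment_eq|].
  apply is_improper_RInt_plus;
    [apply is_improper_RInt_scal, is_improper_RInt_normal_cauchy | apply is_improper_RInt_scal].
  apply (is_improper_RInt_comp_lin (fun u => Im (kernel p q 1 u))).
  - apply Rinv_neq_0_compat; lra.
  - exact (proj2 (is_improper_CRInt_voigt p q Hp 1 Rlt_0_1)).
Qed.

Lemma posterior_mean_normal_cauchy :
  posterior_mean (normal_pdf theta0 sigma0) (cauchy_pdf 0 sigmaeps) x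
  = x + sigmaeps * (Im (voigt p q 1) / Re (voigt p q 1)).
Proof.
  rewrite (posterior_mean_eq _ _ _ _ _ is_improper_RInt_normal_cauchy
             is_improper_RInt_normal_cauchy_moment).
  pose proof (Re_voigt_pos p q Hp 1 Rlt_0_1).
  assert (0 < k).
  { unfold k. pose proof PI_RGT_0. pose proof (sqrt_lt_R0 (2 * PI) ltac:(lra)).
    apply Rinv_0_lt_compat. apply Rmult_lt_0_compat; [apply Rmult_lt_0_compat|]; lra. }
  rewrite Hse. fold beta. field. split; lra.
Qed.

End NormalCauchy.

Theorem mainTheorem5 (sigma0 sigmaeps theta0 x : R) :
  0 < sigma0 -> 0 < sigmaeps ->
  let x0 := (x - theta0) / sigma0 in
  let a := sigmaeps / sigma0 in
  let z : C := (a / sqrt 2, x0 / sqrt 2) in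
  posterior_mean (normal_pdf theta0 sigma0) (cauchy_pdf 0 sigmaeps) x
  = x + sigmaeps * (Im (erfcx z) / Re (erfcx z)).
Proof.
  intros Hs0 Hse x0 a z.
  assert (Hs2 : 0 < sqrt 2) by (apply sqrt_lt_R0; lra).
  assert (Hp : 0 < a / sqrt 2) by (unfold a; repeat apply Rdiv_lt_0_compat; auto).
  rewrite (posterior_mean_normal_cauchy sigma0 sigmaeps theta0 x (a / sqrt 2) (x0 / sqrt 2));
    auto; [| unfold a; field; lra | unfold x0; field; lra].
  pose proof (Re_voigt_pos _ (x0 / sqrt 2) Hp 1 Rlt_0_1) as Hpos.
  rewrite voigt_1_erfcx in * by auto. fold z in Hpos |- *.
  destruct (erfcx z) as [re im]. simpl in *. pose proof PI_RGT_0.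
  field. nra.
Qed.
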